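(* For every positive integer $N$ there exists a full spark equal norm tight integer frame with $2N$ elements in $\mathcal{H}_2$.
   Context: $\mathcal{H}_M$ is the real $M$-dimensional Hilbert space, identified with $\mathbb{R}^M$ via a fixed orthonormal basis. An equal norm tight integer frame (ENTIF) with $N$ elements in $\mathcal{H}_M$ is an $M\times N$ integer matrix $A$ of rank $M$ with $AA^T=\lambda I_M$ for some $\lambda>0$ and all columns of the same Euclidean norm (its columns are the frame vectors). A frame of $N\ge M$ vectors in $\mathcal{H}_M$ is full spark if every subset of $M$ of its vectors is linearly independent. *)

From mathcomp Require Import all_boot all_order all_algebra.
Set Implicit Arguments. Unset Strict Implicit. Unset Printing Implicit Defensive.
Import Order.TTheory GRing.Theory Num.Theory.
Local Open Scope ring_scope.

(* An M x N integer matrix; its columns are the frame vectors in R^M. *)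
Definition intmx_to_rat (M N : nat) (A : 'M[int]_(M, N)) : 'M[rat]_(M, N) :=
  map_mx (fun z : int => z%:~R) A.

Definition is_ENTIF (M N : nat) (A : 'M[int]_(M, N)) : Prop :=
  [/\ \rank (intmx_to_rat A) = M,
      exists2 lambda : int, 0 < lambda & A *m A^T = lambda%:M
    & forall j k : 'I_N, \sum_(i < M) A i j ^+ 2 = \sum_(i < M) A i k ^+ 2].

Definition full_spark (M N : nat) (A : 'M[int]_(M, N)) : Prop :=
  forall f : 'I_M -> 'I_N, injective f ->
    row_free (colsub f (intmx_to_rat A))^T.

From mathcomp Require Import all_boot all_order all_algebra ring.
Import Order.TTheory GRing.Theory Num.Theory.
Set Implicit Arguments. Unset Strict Implicit. Unset Printing Implicit Defensive.
Local Open Scope ring_scope.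

(* The columns are u_k = P_k (1 - t_k^2, 2 t_k) with t_k = k + 1 and
   P_k = \prod_(l != k) (1 + t_l^2): since |(1 - t^2, 2 t)| = 1 + t^2, every u_k has
   norm \prod_l (1 + t_l^2).  Each u_k is followed by its rotation J u_k by a right
   angle; as u u^T + (J u)(J u)^T = |u|^2 I, the frame operator is scalar.  The u_k have pairwise
   distinct directions 2 arctan t_k, all in [pi/2, pi), so u_k . u_l > 0 and no u_k is
   parallel to a rotated J u_l either. *)

Lemma ord2_cases (i : 'I_2) : i = 0 \/ i = 1.
Proof. by case: i => -[|[|//]] ?; [left | right]; apply/val_inj. Qed.

Lemma det_mx22 (R : comPzRingType) (A : 'M[R]_2) :
  \det A = A 0 0 * A 1 1 - A 0 1 * A 1 0.
Proof.
rewrite (expand_det_row _ 0) !big_ord_recl big_ord0 /cofactor !det_mx11 !mxE /=.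
rewrite addr0 expr0 expr1 mul1r mulN1r mulrN.
by congr (A _ _ * A _ _ - A _ _ * A _ _); apply/val_inj.
Qed.

Lemma mxrank_gram_scalar (F : fieldType) m n (B : 'M[F]_(m, n)) (a : F) :
  a != 0 -> B *m B^T = a%:M -> \rank B = m.
Proof.
move=> a0 gramB; apply/eqP; rewrite eqn_leq rank_leq_row /=.
apply: leq_trans (mxrankM_maxl B B^T).
by rewrite gramB mxrank_unit // unitmxE det_scalar unitfE expf_neq0.
Qed.

Section TwoRowMatrices.
Variables (R : pzRingType) (n : nat).
Implicit Types A V : 'M[R]_(2, n).

Definition col_cross A (j k : 'I_n) := A 0 j * A 1 k - A 0 k * A 1 j.
Definition col_dot A (j k : 'I_n) := A 0 j * A 0 k + A 1 j * A 1 k.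

Definition perp_mx V : 'M[R]_(2, n) :=
  \matrix_(i, j) if i == 0 then - V 1 j else V 0 j.

Definition rot_frame V : 'M[R]_(2, n + n) := row_mx V (perp_mx V).

End TwoRowMatrices.

Lemma rot_frame_gram (R : comPzRingType) n (V : 'M[R]_(2, n)) :
  rot_frame V *m (rot_frame V)^T = (\sum_k col_dot V k k)%:M.
Proof.
rewrite tr_row_mx mul_row_col; apply/matrixP => i j; rewrite !mxE -big_split /=.
under eq_bigr do rewrite !mxE.
have [-> | ->] := ord2_cases i; have [-> | ->] := ord2_cases j => /=.
- by apply: eq_bigr => k _; rewrite /col_dot; ring.
- by rewrite big1 // => k _; ring.
- by rewrite big1 // => k _; ring.
- by apply: eq_bigr => k _; rewrite /col_dot; ring.
Qed.

Lemma sum_sqr_col2 (R : pzRingType) n (A : 'M[R]_(2, n)) j :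
  \sum_(i < 2) A i j ^+ 2 = col_dot A j j.
Proof.
rewrite big_ord_recl big_ord1 !expr2.
by congr (A _ _ * A _ _ + A _ _ * A _ _); apply/val_inj.
Qed.

Lemma rot_frame_col_norm (R : comPzRingType) n (V : 'M[R]_(2, n)) d :
  (forall k, col_dot V k k = d) -> forall j, col_dot (rot_frame V) j j = d.
Proof.
move=> normV j; rewrite /col_dot /rot_frame.
by case: (split_ordP j) => k ->;
  rewrite ?row_mxEl ?row_mxEr ?mxE /= -(normV k) /col_dot //; ring.
Qed.

Lemma rot_frame_cross_neq0 (R : comPzRingType) n (V : 'M[R]_(2, n)) :
  (forall k l, k != l -> col_cross V k l != 0) ->
  (forall k l, col_dot V k l != 0) ->
  forall j j', j != j' -> col_cross (rot_frame V) j j' != 0.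
Proof.
move=> crossV dotV j j'.
case: (split_ordP j) => k ->; case: (split_ordP j') => l ->;
  rewrite ?eq_lshift ?eq_rshift /col_cross /rot_frame ?row_mxEl ?row_mxEr ?mxE /= => kl.
- exact: crossV.
- rewrite (_ : _ - _ = col_dot V k l) ?dotV // /col_dot; ring.
- rewrite (_ : _ - _ = - col_dot V k l) ?oppr_eq0 ?dotV // /col_dot; ring.
- rewrite (_ : _ - _ = col_cross V k l) ?crossV // /col_cross; ring.
Qed.

Lemma full_spark_cross n (A : 'M[int]_(2, n)) :
  (forall j k, j != k -> col_cross A j k != 0) -> full_spark A.
Proof.
move=> crossA f f_inj.
rewrite row_free_unit unitmxE det_tr det_mx22 unitfE !mxE -!intrM -intrB intr_eq0.
by apply: crossA; apply/eqP => /f_inj.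
Qed.

Lemma intmx_rank_gram_scalar m n (A : 'M[int]_(m, n)) (lambda : int) :
  lambda != 0 -> A *m A^T = lambda%:M -> \rank (intmx_to_rat A) = m.
Proof.
move=> lambda0 gramA; apply: (@mxrank_gram_scalar _ _ _ _ lambda%:~R).
  by rewrite intr_eq0.
by rewrite /intmx_to_rat map_trmx -map_mxM gramA map_scalar_mx.
Qed.

Lemma ENTIF_full_spark_castmx m n n' (e : n = n') (A : 'M[int]_(m, n)) :
  is_ENTIF A /\ full_spark A ->
  is_ENTIF (castmx (erefl, e) A) /\ full_spark (castmx (erefl, e) A).
Proof. by case: n' / e; rewrite castmx_id. Qed.

Section PythagoreanColumns.
Variables (R : comPzRingType) (n : nat) (t : 'I_n -> R).

Definition pyth_weight k := \prod_(l | l != k) (1 + t l ^+ 2).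

Definition pyth_mx : 'M[R]_(2, n) :=
  \matrix_(i, k) (pyth_weight k * (if i == 0 then 1 - t k ^+ 2 else 2 * t k)).

Lemma pyth_mx_col_norm k : col_dot pyth_mx k k = (\prod_l (1 + t l ^+ 2)) ^+ 2.
Proof. by rewrite (bigD1 k) //= /col_dot !mxE /= /pyth_weight; ring. Qed.

Lemma pyth_mx_cross k l : col_cross pyth_mx k l =
  2 * pyth_weight k * pyth_weight l * ((t l - t k) * (1 + t k * t l)).
Proof. by rewrite /col_cross !mxE /=; ring. Qed.

Lemma pyth_mx_dot k l : col_dot pyth_mx k l =
  pyth_weight k * pyth_weight l * ((t k ^+ 2 - 1) * (t l ^+ 2 - 1) + 4 * t k * t l).
Proof. by rewrite /col_dot !mxE /=; ring. Qed.

End PythagoreanColumns.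

Section PythagoreanSigns.
Variables (R : realDomainType) (n : nat) (t : 'I_n -> R).

Lemma pyth_weight_gt0 k : 0 < pyth_weight t k.
Proof. by apply: prodr_gt0 => l _; rewrite ltr_wpDr ?sqr_ge0. Qed.

Lemma pyth_mx_cross_neq0 : injective t -> (forall k, 0 < t k) ->
  forall k l, k != l -> col_cross (pyth_mx t) k l != 0.
Proof.
move=> t_inj t_gt0 k l kl.
rewrite pyth_mx_cross !mulf_neq0 ?(gt_eqF (pyth_weight_gt0 _)) ?pnatr_eq0 //.
  by rewrite subr_eq0 (inj_eq t_inj) eq_sym.
by rewrite gt_eqF // ltr_wpDr // ltW // mulr_gt0.
Qed.

Lemma pyth_mx_dot_gt0 : (forall k, 1 <= t k) -> forall k l, 0 < col_dot (pyth_mx t) k l.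
Proof.
move=> t_ge1 k l; rewrite pyth_mx_dot !mulr_gt0 ?pyth_weight_gt0 //.
have t_gt0 m : 0 < t m by apply: lt_le_trans (t_ge1 m).
rewrite ltr_wpDl ?mulr_ge0 ?mulr_gt0 // subr_ge0 exprn_ege1 //.
Qed.

End PythagoreanSigns.

Theorem theorem4p2 (N : nat) (hN : (0 < N)%N) :
  exists A : 'M[int]_(2, 2 * N), is_ENTIF A /\ full_spark A.
Proof.
pose t (k : 'I_N) : int := k.+1%:Z.
have t_inj : injective t by move=> k l [] /val_inj.
have t_ge1 k : 1 <= t k by rewrite lez_nat.
pose V := pyth_mx t; pose D := \prod_(k < N) (1 + t k ^+ 2).
have normV k : col_dot V k k = D ^+ 2 by apply: pyth_mx_col_norm.
have normA := rot_frame_col_norm normV.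
have lambda_gt0 : 0 < \sum_k col_dot V k k.
  rewrite (eq_bigr _ (fun k _ => normV k)) sumr_const card_ord pmulrn_lgt0 //.
  by rewrite exprn_gt0 // prodr_gt0 // => k _; rewrite ltr_wpDr ?sqr_ge0.
exists (castmx (erefl, etrans (addnn N) (esym (mul2n N))) (rot_frame V)).
apply: ENTIF_full_spark_castmx; split; last first.
  apply/full_spark_cross/rot_frame_cross_neq0 => [k l kl | k l].
    by apply: pyth_mx_cross_neq0 => // k'; apply: lt_le_trans (t_ge1 k').
  by rewrite gt_eqF ?pyth_mx_dot_gt0.
split.
- exact: intmx_rank_gram_scalar (lt0r_neq0 lambda_gt0) (rot_frame_gram V).
- by exists (\sum_k col_dot V k k) => //; apply: rot_frame_gram.
- by move=> j k; rewrite !sum_sqr_col2 !normA.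
Qed.
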